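(* Let $X,Y\subseteq\mathbb{R}^{\mathbb{Z}_<}$, equipped with the metric $d(\mathbf{x},\mathbf{y})=|\mathbf{y}-\mathbf{x}|$. A function $f:X\to Y$ is $\iota$-continuous if and only if $f$ satisfies $\mathrm{ED}$.
   Context: $\mathbb{R}^{\mathbb{Z}_<}$ is the set of formal series $\sum_{i\ge -k}a_i\epsilon^i$ ($k\in\mathbb{N}\cup\{0\}$, $a_i\in\mathbb{R}$), with coefficientwise addition, Cauchy-product multiplication and lexicographic order; $|\cdot|$ is the associated absolute value. For $m\in\mathbb{N}\cup\{0\}$ let $\Delta^m=\{a\epsilon^m:a\in\mathbb{R}\}$ (with $a\ne0$ when $m\ge1$) and $\Delta^{\downarrow m}=\bigcup_{n\ge m}\Delta^n$. In a subset $Z$, $B_{\mathbf{x}}(\mathbf{r})=\{\mathbf{z}\in Z:d(\mathbf{x},\mathbf{z})<\mathbf{r}\}$, and $O\subseteq Z$ is $\iota$-open iff for every $\mathbf{x}\in O$ there is a positive $\iota\in\Delta^{\downarrow m}$ (some $m$) with $B_{\mathbf{x}}(\iota)\subseteq O$. $f$ is $\iota$-continuous iff $f^{-1}(U)$ is $\iota$-open in $X$ whenever $U\subseteq Y$ is $\iota$-open. $f$ satisfies $\mathrm{ED}$ iff at every $\mathbf{c}\in X$, for every positive $\iota_1\in\mathbb{R}^{\mathbb{Z}_<}$ there is a positive $\iota_2\in\mathbb{R}^{\mathbb{Z}_<}$ with $|f(\mathbf{x})-f(\mathbf{c})|<\iota_1$ whenever $\mathbf{x}\in X$ and $|\mathbf{x}-\mathbf{c}|<\iota_2$.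 *)

From Stdlib Require Import Reals ZArith Lia Lra ClassicalEpsilon.
Open Scope R_scope.

(* R^{Z_<}: formal series sum_{i >= -k} a_i eps^i, represented by the
   coefficient function Z -> R, vanishing below some index. *)
Record LS := mkLS {
  coef : Z -> R ;
  coef_lb : exists k : Z, forall i : Z, (i < k)%Z -> coef i = 0
}.

Definition ls_zero : LS.
Proof. refine (mkLS (fun _ => 0) _). exists 0%Z. reflexivity. Defined.

Definition ls_add (x y : LS) : LS.
Proof.
  refine (mkLS (fun i => coef x i + coef y i) _).
  destruct (coef_lb x) as [k1 H1]; destruct (coef_lb y) as [k2 H2].
  exists (Z.min k1 k2). intros i Hi.
  rewrite H1 by lia. rewrite H2 by lia. ring.
Defined.

Definition ls_opp (x : LS) : LS.
Proof.
  refine (mkLS (fun i => - coef x i) _).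
  destruct (coef_lb x) as [k H]. exists k. intros i Hi. rewrite H by lia. ring.
Defined.

Definition ls_sub (x y : LS) : LS := ls_add x (ls_opp y).

Definition ls_lt (x y : LS) : Prop :=
  exists n : Z, (forall i : Z, (i < n)%Z -> coef x i = coef y i) /\ coef x n < coef y n.

Definition ls_abs (x : LS) : LS :=
  if excluded_middle_informative (ls_lt x ls_zero) then ls_opp x else x.

Definition ls_dist (x y : LS) : LS := ls_abs (ls_sub y x).

Definition in_Delta (m : nat) (r : LS) : Prop :=
  exists a : R, ((1 <= m)%nat -> a <> 0) /\
    forall j : Z, coef r j = (if Z.eq_dec j (Z.of_nat m) then a else 0).

Definition in_Delta_down (m : nat) (r : LS) : Prop :=
  exists n : nat, (m <= n)%nat /\ in_Delta n r.

Definition ball (Zs : LS -> Prop) (x r : LS) : LS -> Prop :=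
  fun z => Zs z /\ ls_lt (ls_dist x z) r.

Definition iota_open (Zs O : LS -> Prop) : Prop :=
  (forall x, O x -> Zs x) /\
  forall x, O x -> exists (m : nat) (r : LS),
      in_Delta_down m r /\ ls_lt ls_zero r /\ (forall z, ball Zs x r z -> O z).

Definition iota_continuous (X Y : LS -> Prop) (f : LS -> LS) : Prop :=
  forall U : LS -> Prop, iota_open Y U -> iota_open X (fun x => X x /\ U (f x)).

Definition ED (X : LS -> Prop) (f : LS -> LS) : Prop :=
  forall c, X c -> forall r1 : LS, ls_lt ls_zero r1 ->
    exists r2 : LS, ls_lt ls_zero r2 /\
      forall x, X x -> ls_lt (ls_abs (ls_sub x c)) r2 ->
        ls_lt (ls_abs (ls_sub (f x) (f c))) r1.

From Stdlib Require Import Reals ZArith.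
From Stdlib Require Import Lia Lra ClassicalEpsilon.
Open Scope R_scope.

(* Both notions of continuity are governed by the same neighbourhoods: the
   points whose coefficients agree with the centre below some index.  Indeed
   [|x - y| < eps^N] forces [x] and [y] to agree below [N], while agreement
   below [n0 + 1] gives [|x - y| < r] for every positive [r] of leading index
   [n0].  Hence the balls of radius [eps^N] are cofinal among all positive
   radii, and ED and iota-continuity say the same thing. *)

Definition eps_pow (N : nat) : LS.
Proof.
  refine (mkLS (fun j => if Z.eq_dec j (Z.of_nat N) then 1 else 0) _).
  exists (Z.of_nat N). intros i Hi.
  destruct (Z.eq_dec i (Z.of_nat N)); [lia | reflexivity].
Defined.

Lemma eps_pow_gt0 (N : nat) : ls_lt ls_zero (eps_pow N).
Proof.
  exists (Z.of_nat N). split.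
  - intros i Hi. simpl. destruct (Z.eq_dec i (Z.of_nat N)); [lia | reflexivity].
  - simpl. destruct (Z.eq_dec (Z.of_nat N) (Z.of_nat N)); [lra | lia].
Qed.

Lemma eps_pow_Delta_down (N : nat) : in_Delta_down N (eps_pow N).
Proof.
  exists N. split; [lia |]. exists 1. split; [intros; lra | reflexivity].
Qed.

Lemma coef_abs_eq0 (w : LS) (i : Z) : coef (ls_abs w) i = 0 <-> coef w i = 0.
Proof.
  unfold ls_abs. destruct (excluded_middle_informative (ls_lt w ls_zero)); simpl; lra.
Qed.

Lemma ls_abs_nlt0 (w : LS) : ~ ls_lt (ls_abs w) ls_zero.
Proof.
  unfold ls_abs. destruct (excluded_middle_informative (ls_lt w ls_zero)) as [Hw | Hw];
    [| exact Hw].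
  intros [m [Hm_eq Hm_lt]]. destruct Hw as [n [Hn_eq Hn_lt]]. simpl in *.
  destruct (Z.lt_trichotomy n m) as [Hnm | [<- | Hmn]].
  - specialize (Hm_eq n Hnm). lra.
  - lra.
  - specialize (Hn_eq m Hmn). lra.
Qed.

Definition agree_below (n : Z) (x y : LS) : Prop :=
  forall i, (i < n)%Z -> coef x i = coef y i.

Lemma agree_below_trans (n : Z) (x y z : LS) :
  agree_below n x y -> agree_below n y z -> agree_below n x z.
Proof. intros Hxy Hyz i Hi. rewrite Hxy, Hyz by exact Hi. reflexivity. Qed.

Lemma agree_below_sub (n : Z) (x y : LS) :
  agree_below n x y <-> forall i, (i < n)%Z -> coef (ls_sub x y) i = 0.
Proof.
  split; intros H i Hi; specialize (H i Hi); simpl in *; lra.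
Qed.

Lemma abs_sub_lt_eps_pow_agree (N : nat) (x y : LS) :
  ls_lt (ls_abs (ls_sub x y)) (eps_pow N) -> agree_below (Z.of_nat N) x y.
Proof.
  intros [n [Hn_eq Hn_lt]].
  apply agree_below_sub. intros i Hi. apply coef_abs_eq0.
  assert (Heps : forall j, (j < Z.of_nat N)%Z -> coef (eps_pow N) j = 0).
  { intros j Hj. simpl. destruct (Z.eq_dec j (Z.of_nat N)); [lia | reflexivity]. }
  destruct (Z_lt_le_dec i n) as [Hin | Hni].
  - rewrite Hn_eq by exact Hin. apply Heps, Hi.
  - (* otherwise the first difference with [eps^N] would make [|x - y|] negative *)
    exfalso. apply (ls_abs_nlt0 (ls_sub x y)). exists n. split.
    + intros j Hj. rewrite Hn_eq by exact Hj. apply Heps. lia.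
    + rewrite Heps in Hn_lt by lia. exact Hn_lt.
Qed.

Lemma agree_below_abs_sub_lt (r : LS) : ls_lt ls_zero r ->
  exists N : nat, forall x y, agree_below (Z.of_nat N) x y -> ls_lt (ls_abs (ls_sub x y)) r.
Proof.
  intros [n0 [Hr_eq Hr_lt]].
  exists (Z.to_nat (n0 + 1)). intros x y Hxy.
  assert (Habs : forall i, (i <= n0)%Z -> coef (ls_abs (ls_sub x y)) i = 0).
  { intros i Hi. apply coef_abs_eq0. apply agree_below_sub with (n := Z.of_nat (Z.to_nat (n0 + 1))).
    - exact Hxy.
    - lia. }
  exists n0. split.
  - intros i Hi. rewrite Habs by lia. apply Hr_eq, Hi.
  - rewrite Habs by lia. exact Hr_lt.
Qed.

Lemma abs_sub_lt_eps_pow_cofinal (r : LS) : ls_lt ls_zero r ->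
  exists N : nat, forall x y,
    ls_lt (ls_abs (ls_sub x y)) (eps_pow N) -> ls_lt (ls_abs (ls_sub x y)) r.
Proof.
  intros Hr. destruct (agree_below_abs_sub_lt r Hr) as [N HN].
  exists N. intros x y Hxy. apply HN, abs_sub_lt_eps_pow_agree, Hxy.
Qed.

Section Continuity.

Variables (X Y : LS -> Prop) (f : LS -> LS).
Hypothesis f_maps : forall x, X x -> Y (f x).

Lemma agree_below_iota_open (N : nat) (c : LS) :
  iota_open Y (fun y => Y y /\ agree_below (Z.of_nat N) y c).
Proof.
  split; [intros y [Yy _]; exact Yy |].
  intros y [_ Hyc]. exists N, (eps_pow N).
  split; [apply eps_pow_Delta_down |]. split; [apply eps_pow_gt0 |].
  intros z [Yz Hz]. split; [exact Yz |].
  apply agree_below_trans with y; [apply abs_sub_lt_eps_pow_agree, Hz | exact Hyc].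
Qed.

Lemma iota_continuous_ED : iota_continuous X Y f -> ED X f.
Proof.
  intros Hcont c Xc r1 Hr1.
  destruct (agree_below_abs_sub_lt r1 Hr1) as [N HN].
  destruct (Hcont _ (agree_below_iota_open N (f c))) as [_ Hopen].
  destruct (Hopen c) as [_ [r2 [_ [Hr2 Hball]]]].
  { split; [exact Xc |]. split; [apply f_maps, Xc | intros i _; reflexivity]. }
  exists r2. split; [exact Hr2 |]. intros x Xx Hx.
  destruct (Hball x (conj Xx Hx)) as [_ [_ Hagree]].
  apply HN, Hagree.
Qed.

Lemma ED_iota_continuous : ED X f -> iota_continuous X Y f.
Proof.
  intros Hed U [_ HU]. split; [intros x [Xx _]; exact Xx |].
  intros x [Xx Ux]. destruct (HU (f x) Ux) as [_ [r [_ [Hr Hball]]]].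
  destruct (Hed x Xx r Hr) as [r2 [Hr2 Hdelta]].
  destruct (abs_sub_lt_eps_pow_cofinal r2 Hr2) as [N HN].
  exists N, (eps_pow N). split; [apply eps_pow_Delta_down |]. split; [apply eps_pow_gt0 |].
  intros z [Xz Hz]. split; [exact Xz |].
  apply Hball. split; [apply f_maps, Xz |].
  apply Hdelta; [exact Xz | apply HN, Hz].
Qed.

End Continuity.

Theorem mainTheorem14 (X Y : LS -> Prop) (f : LS -> LS)
  (Hf : forall x, X x -> Y (f x)) :
  iota_continuous X Y f <-> ED X f.
Proof.
  split; [apply iota_continuous_ED | apply ED_iota_continuous]; exact Hf.
Qed.
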